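(* Let $f:\mathbb{Z}^n\to\mathbb{R}\cup\{+\infty\}$ be an M-convex function with bounded $\operatorname{dom} f$, and $x_0\in\operatorname{dom} f$. Run algorithm M-SD from $x_0$ (with any choice of minimizing pair in each iteration), and let $x^*$ be its output. Then for every $i\in N$, along the sequence of iterates the component $x(i)$ is non-increasing if $x^*(i)\le x_0(i)$ and non-decreasing if $x^*(i)\ge x_0(i)$.
   Context: $N=\{1,\dots,n\}$; $\chi_i\in\{0,1\}^n$ is the $i$-th unit vector. For $f:\mathbb{Z}^n\to\mathbb{R}\cup\{+\infty\}$, $\operatorname{dom} f=\{x\in\mathbb{Z}^n: f(x)<+\infty\}$. $f$ is M-convex if $\operatorname{dom} f\neq\emptyset$ and for all $x,y\in\operatorname{dom} f$ and every $i$ with $x(i)>y(i)$ there is $j$ with $x(j)<y(j)$ such that $f(x)+f(y)\ge f(x-\chi_i+\chi_j)+f(y+\chi_i-\chi_j)$. For $x\in\operatorname{dom} f$ and $i,j\in N$, $f'(x;i,j)=f(x+\chi_i-\chi_j)-f(x)$ (possibly $+\infty$). Algorithm M-SD: set $x:=x_0$; repeatedly choose $i,j\in N$ minimizing $f'(x;i,j)$; if $f'(x;i,j)=0$ output $x$ and stop; otherwise set $x:=x+\chi_i-\chi_j$ and repeat. *)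

From HB Require Import structures.
From mathcomp Require Import all_boot all_order all_algebra.
From mathcomp Require Import reals constructive_ereal.
Set Implicit Arguments. Unset Strict Implicit. Unset Printing Implicit Defensive.
Import Order.TTheory GRing.Theory Num.Theory.
Local Open Scope ring_scope.
Local Open Scope ereal_scope.

Definition pt (n : nat) := {ffun 'I_n -> int}.

Definition chi (n : nat) (i : 'I_n) : pt n := [ffun j => ((j == i) : nat)%:Z].

Definition move (n : nat) (x : pt n) (i j : 'I_n) : pt n :=
  [ffun k => (x k + chi i k - chi j k)%R].

(* f : Z^n -> R \cup {+oo}, modelled as \bar R never taking -oo. *)
Definition never_mnoo (R : realType) (n : nat) (f : pt n -> \bar R) : Prop :=
  forall x, f x != -oo.

Definition in_dom (R : realType) (n : nat) (f : pt n -> \bar R) (x : pt n) : Prop :=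
  f x < +oo.

Definition M_convex (R : realType) (n : nat) (f : pt n -> \bar R) : Prop :=
  (exists x, in_dom f x) /\
  forall x y, in_dom f x -> in_dom f y ->
    forall i, (y i < x i)%R ->
      exists2 j, (x j < y j)%R &
        f (move x j i) + f (move y i j) <= f x + f y.

Definition bounded_dom (R : realType) (n : nat) (f : pt n -> \bar R) : Prop :=
  exists B : int, forall x, in_dom f x -> forall i, (`|x i| <= B)%R.

Definition fder (R : realType) (n : nat) (f : pt n -> \bar R) (x : pt n) (i j : 'I_n)
  : \bar R := f (move x i j) - f x.

Definition minimizing (R : realType) (n : nat) (f : pt n -> \bar R) (x : pt n) (i j : 'I_n)
  : Prop := forall k l, fder f x i j <= fder f x k l.

(* A terminating run of M-SD: iterates xs 0 = x0, ..., xs m = output. *)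
Definition MSD_run (R : realType) (n : nat) (f : pt n -> \bar R) (x0 : pt n)
  (xs : nat -> pt n) (m : nat) : Prop :=
  [/\ xs 0%N = x0,
      (forall k, (k < m)%N -> exists i j,
          [/\ minimizing f (xs k) i j, fder f (xs k) i j != 0
            & xs k.+1 = move (xs k) i j])
    & exists i j, minimizing f (xs m) i j /\ fder f (xs m) i j = 0].

(* Say that coordinate a is up-stable at x when no exchange x + chi_a - chi_l
   lowers f.  If M-SD moves from x to x' = x + chi_i - chi_j, then j is
   up-stable at x', and up-stability of every other coordinate persists.
   Hence a coordinate that has decreased once never increases again: a step
   raising it would lower f at an up-stable coordinate.  The same argument
   for f(-x), which is M-convex and run by M-SD along -x_k, shows that a
   coordinate that has increased never decreases.  So every coordinate is
   monotone along the run, in the direction of x* - x0. *)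

From HB Require Import structures.
From mathcomp Require Import all_boot all_order all_algebra.
From mathcomp Require Import reals constructive_ereal zify.
Set Implicit Arguments. Unset Strict Implicit. Unset Printing Implicit Defensive.
Import Order.TTheory GRing.Theory Num.Theory Order.NatMonotonyTheory.
Local Open Scope ring_scope.

Lemma monotone_steps_of_no_turn {d} (T : orderType d) (g : nat -> T) (m : nat) :
  (forall s t, (s < m)%N -> (t < m)%N -> (g s.+1 < g s)%O -> ~ (g t < g t.+1)%O) ->
  ((g m <= g 0%N)%O -> forall k, (k < m)%N -> (g k.+1 <= g k)%O) /\
  ((g 0%N <= g m)%O -> forall k, (k < m)%N -> (g k <= g k.+1)%O).
Proof.
move=> no_turn; set D := [pred k | k <= m]%N.
have convD : {in D &, forall i j k, (i < k < j)%N -> k \in D}.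
  by move=> i j _ jm k /andP[_ /ltnW/leq_trans]; apply.
have D0 : 0%N \in D by [].
have Dm : m \in D by rewrite /D inE.
split=> g_end k km; rewrite leNgt; apply/negP => turn.
- have g_mono : {in D &, forall i j, (i <= j)%N -> (g i <= g j)%O}.
    apply: nondecn_inP convD _ => t _ tm.
    by rewrite leNgt; apply/negP => drop; apply: (no_turn t k) turn.
  have g0k := g_mono 0%N k D0 (ltnW km) (leq0n k).
  have gkm := g_mono k.+1 m km Dm km.
  by have := lt_le_trans (le_lt_trans g0k turn) gkm; rewrite ltNge g_end.
- have g_anti : {in D &, forall i j, (j <= i)%N -> (g i <= g j)%O}.
    apply: nonincn_inP convD _ => t _ tm.
    by rewrite leNgt; apply/negP => rise; apply: (no_turn k t) rise.
  have gk0 := g_anti k 0%N (ltnW km) D0 (leq0n k).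
  have gmk := g_anti m k.+1 Dm km km.
  by have := lt_le_trans (le_lt_trans gmk turn) gk0; rewrite ltNge g_end.
Qed.

Section Moves.
Variable n : nat.
Implicit Types (x : pt n) (i j k l : 'I_n).

Lemma moveE x i j : move x i j = x + chi i - chi j.
Proof. by apply/ffunP => k; rewrite !ffunE. Qed.

Lemma move_id x i : move x i i = x.
Proof. by rewrite moveE addrK. Qed.

Lemma move_move x i j l : move (move x i j) j l = move x i l.
Proof. by rewrite !moveE subrK. Qed.

Lemma move_moveC x i j k l : move (move x i j) k l = move (move x k l) i j.
Proof. by apply/ffunP => a; rewrite !ffunE; lia. Qed.

Lemma moveK x i j : move (move x i j) j i = x.
Proof. by rewrite move_move move_id. Qed.

Lemma move_opp x i j : move (- x) i j = - move x j i.
Proof. by rewrite !moveE opprB opprD addrAC addrC. Qed.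

Lemma opp_ptE x k : (- x) k = - x k.
Proof. by rewrite !ffunE. Qed.

Lemma move_lt x i j k : move x i j k < x k -> k = j.
Proof. by rewrite !ffunE; case: (k =P j) => //; case: (k == i) => /=; lia. Qed.

Lemma move_gt x i j k : x k < move x i j k -> k = i.
Proof. by rewrite !ffunE; case: (k =P i) => //; case: (k == j) => /=; lia. Qed.

End Moves.

Section Reflection.
Variables (R : realType) (n : nat) (f : pt n -> \bar R).
Implicit Types (x : pt n) (i j : 'I_n).

(* Reflection x |-> -x turns rising coordinates of an M-SD run into dropping ones. *)
Definition oppf : pt n -> \bar R := fun x => f (- x).

Lemma never_mnoo_opp : never_mnoo f -> never_mnoo oppf.
Proof. by move=> f_gtNy x; apply: f_gtNy. Qed.

Lemma in_dom_opp x : in_dom f x -> in_dom oppf (- x).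
Proof. by rewrite /in_dom /oppf /= opprK. Qed.

Lemma fder_opp x i j : fder oppf (- x) i j = fder f x j i.
Proof. by rewrite /fder /oppf /= move_opp !opprK. Qed.

Lemma minimizing_opp x i j : minimizing f x i j -> minimizing oppf (- x) j i.
Proof. by move=> ijmin k l; rewrite !fder_opp. Qed.

Lemma M_convex_opp : M_convex f -> M_convex oppf.
Proof.
case=> [[z zdom] exch]; split; first by exists (- z); apply: in_dom_opp.
move=> x y xdom ydom i yx_i.
have xy_i : ((- x) i < (- y) i)%R by rewrite !opp_ptE ltrN2.
have [j yx_j ineq] := exch _ _ ydom xdom i xy_i.
exists j; first by move: yx_j; rewrite !opp_ptE ltrN2.
by rewrite /oppf -!move_opp addeC [(f _ + _)%E]addeC.
Qed.

Lemma MSD_run_opp x0 xs m :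
  MSD_run f x0 xs m -> MSD_run oppf (- x0) (fun k => - xs k) m.
Proof.
case=> xs0 steps [i [j [ijmin ijeq0]]]; split; first by rewrite xs0.
  move=> k km; have [i' [j' [ijmin' ijneq0 ->]]] := steps k km.
  exists j', i'.
  by split; [exact: minimizing_opp | rewrite fder_opp | rewrite move_opp].
by exists j, i; split; [apply: minimizing_opp | rewrite fder_opp].
Qed.

End Reflection.

Lemma leeD2r_cancel (R : realDomainType) (a b c d : \bar R) :
  c \is a fin_num -> (c <= d)%E -> (a + d <= b + c)%E -> (a <= b)%E.
Proof.
move=> cfin cd abcd; rewrite -(leeD2rE _ _ cfin).
exact: le_trans (leeD2l a cd) abcd.
Qed.

Section SteepestDescentStep.
Variables (R : realType) (n : nat) (f : pt n -> \bar R).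
Hypothesis f_gtNy : never_mnoo f.
Implicit Types (x : pt n) (a i j l : 'I_n).

Local Open Scope ereal_scope.

Lemma dom_fin_num x : in_dom f x -> f x \is a fin_num.
Proof. by move=> xdom; rewrite fin_numE f_gtNy (lt_eqF xdom). Qed.

Lemma minimizing_le x i j k l :
  in_dom f x -> minimizing f x i j -> f (move x i j) <= f (move x k l).
Proof.
by move=> /dom_fin_num xfin ijmin; have := ijmin k l; rewrite /fder leeD2rE ?fin_numN.
Qed.

Lemma descent_lt x i j : in_dom f x -> minimizing f x i j -> fder f x i j != 0 ->
  f (move x i j) < f x.
Proof.
move=> /dom_fin_num xfin ijmin; have := ijmin i i; rewrite /fder move_id subee //.
by move=> le0 neq0; rewrite -suber_lt0 // lt_neqAle neq0 le0.
Qed.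

Definition up_stable x a := forall l, f x <= f (move x a l).

Hypothesis f_Mconvex : M_convex f.

Lemma up_stable_move_last x i j :
  in_dom f x -> minimizing f x i j -> up_stable (move x i j) j.
Proof. by move=> xdom ijmin l; rewrite move_move; apply: minimizing_le. Qed.

(* For a outside {i, j, l}, exchange z := x + chi_i - chi_j + chi_a - chi_l with x
   at coordinate a; the partner coordinate is j or l, and in either case
   up-stability at x together with the minimality of (i, j) yields
   f (move x i j) <= f z. *)
Lemma up_stable_move x i j a : in_dom f x -> minimizing f x i j -> fder f x i j != 0 ->
  up_stable x a -> up_stable (move x i j) a.
Proof.
move=> xdom ijmin ijneq0 a_stable l.
have desc := descent_lt xdom ijmin ijneq0.
have [<-|al] := eqVneq a l; first by rewrite move_id.
have [->|aj] := eqVneq a j; first exact: up_stable_move_last.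
have [ai|ai] := eqVneq a i.
  by have := lt_le_trans desc (a_stable j); rewrite ai ltxx.
set z := move (move x i j) a l.
have [zdom|] := ltP (f z) +oo; last by rewrite leye_eq => /eqP ->; rewrite leey.
have xz_a : (x a < z a)%R.
  by rewrite /z !ffunE (negbTE ai) (negbTE aj) eqxx (negbTE al) /=; lia.
have [k zx_k exch] := f_Mconvex.2 z x zdom xdom a xz_a.
have xfin := dom_fin_num xdom.
have [kj|kl] : k = j \/ k = l.
  move: zx_k; rewrite /z !ffunE.
  by case: (k =P j); case: (k =P l); case: (k == i); case: (k == a) => /=; auto; lia.
- move: exch; rewrite kj.
  have -> : move z j a = move x i l by rewrite /z move_moveC !move_move.
  move=> /(leeD2r_cancel xfin (a_stable j)); apply: le_trans.
  exact: minimizing_le.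
- move: exch; rewrite kl /z moveK.
  exact: leeD2r_cancel xfin (a_stable l).
Qed.

End SteepestDescentStep.

Section SteepestDescentRun.
Variables (R : realType) (n : nat) (f : pt n -> \bar R).
Hypotheses (f_gtNy : never_mnoo f) (f_Mconvex : M_convex f).
Variables (x0 : pt n) (xs : nat -> pt n) (m : nat).
Hypotheses (x0dom : in_dom f x0) (run : MSD_run f x0 xs m).

Lemma MSD_step k : (k < m)%N -> exists i j,
  [/\ minimizing f (xs k) i j, fder f (xs k) i j != 0%E & xs k.+1 = move (xs k) i j].
Proof. by case: run => _ + _; apply. Qed.

Lemma MSD_in_dom k : (k <= m)%N -> in_dom f (xs k).
Proof.
elim: k => [_|k IHk km]; first by case: run => ->.
have [i [j [ijmin ijneq0 ->]]] := MSD_step km.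
have kdom := IHk (ltnW km).
exact: lt_le_trans (descent_lt f_gtNy kdom ijmin ijneq0) (leey _).
Qed.

Lemma up_stable_after_drop s k a : (s < k <= m)%N -> (xs s.+1 a < xs s a)%R ->
  up_stable f (xs k) a.
Proof.
case/andP=> + km drop; elim: k km => // k IHk km.
have [i [j [ijmin ijneq0 xs_next]]] := MSD_step km.
have kdom := MSD_in_dom (ltnW km).
rewrite xs_next ltnS leq_eqVlt => /orP[/eqP sk|sk].
  move: drop; rewrite sk xs_next => /move_lt ->.
  exact: (up_stable_move_last f_gtNy kdom ijmin).
exact: (up_stable_move f_gtNy f_Mconvex kdom ijmin ijneq0 (IHk (ltnW km) sk)).
Qed.

Lemma no_rise_after_drop s t a : (s < t < m)%N ->
  (xs s.+1 a < xs s a)%R -> ~ (xs t a < xs t.+1 a)%R.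
Proof.
case/andP=> st tm drop.
have [i [j [ijmin ijneq0 ->]]] := MSD_step tm.
move=> /move_gt ai; subst a.
have stm : (s < t <= m)%N by rewrite st ltnW.
have := descent_lt f_gtNy (MSD_in_dom (ltnW tm)) ijmin ijneq0.
by rewrite ltNge (up_stable_after_drop stm drop j).
Qed.

End SteepestDescentRun.

Lemma no_drop_after_rise (R : realType) (n : nat) (f : pt n -> \bar R) x0 xs m s t a :
  never_mnoo f -> M_convex f -> in_dom f x0 -> MSD_run f x0 xs m -> (s < t < m)%N ->
  (xs s a < xs s.+1 a)%R -> ~ (xs t.+1 a < xs t a)%R.
Proof.
move=> f_gtNy f_Mconvex x0dom run.
have := no_rise_after_drop (never_mnoo_opp f_gtNy) (M_convex_opp f_Mconvex)
  (in_dom_opp x0dom) (MSD_run_opp run) (s := s) (t := t) (a := a).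
by rewrite /= !opp_ptE !ltrN2.
Qed.

(* Boundedness of dom f only serves termination of M-SD, which the finite run
   xs already witnesses. *)
Theorem mainTheorem7 (R : realType) (n : nat) (f : pt n -> \bar R)
  (hf : never_mnoo f) (hM : M_convex f) (hB : bounded_dom f)
  (x0 : pt n) (hx0 : in_dom f x0)
  (xs : nat -> pt n) (m : nat) (hrun : MSD_run f x0 xs m) :
  forall i : 'I_n,
    (xs m i <= x0 i -> forall k, (k < m)%N -> xs k.+1 i <= xs k i) /\
    (x0 i <= xs m i -> forall k, (k < m)%N -> xs k i <= xs k.+1 i).
Proof.
move=> a; have [<- _ _] := hrun.
apply: (monotone_steps_of_no_turn (g := fun k => xs k a)) => s t sm tm.
case: (ltngtP s t) => [st|ts|<-].
- by apply: (no_rise_after_drop hf hM hx0 hrun); rewrite st tm.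
- move=> drop rise.
  by apply: (no_drop_after_rise hf hM hx0 hrun _ rise drop); rewrite ts sm.
- by move=> /lt_trans h /h; rewrite ltxx.
Qed.
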